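(* Consider Dynamic A* (with \texttt{reeval} true or false) using a dyn-admissible dynamic heuristic on a solvable transition system with initial state $s_I$. Then at the beginning of each iteration of the while loop, Open contains an entry $\langle\cdot,\hat g,\hat h\rangle$ with $\hat g+\hat h\le h^*(s_I)$.
   Context: A transition system is $\mathcal T=\langle S,L,c,T,s_I,S_G\rangle$ with finite states $S$, finite labels $L$, cost function $c:L\to\mathbb R_{\ge0}$, transitions $T\subseteq S\times L\times S$, initial state $s_I$, goal states $S_G\subseteq S$. Paths, costs, solutions (paths from $s_I$ to a goal state) are as usual; $\mathcal T$ is solvable if it has a solution; $g^*(s)$ is the cost of an optimal path from $s_I$ to $s$ and $h^*(s)$ the minimal cost of a path from $s$ to a goal ($\infty$ if none). An information source $\sigma$ consists of a set $\mathcal I_\sigma$, $\iota_0^\sigma\in\mathcal I_\sigma$, $\mathrm{update}_\sigma:\mathcal I_\sigma\times T\to\mathcal I_\sigma$, $\mathrm{refine}_\sigma:\mathcal I_\sigma\times S\to\mathcal I_\sigma$. Reachable information: $\iota_n$ is reachable if obtained from $\iota_0^\sigma$ by a sequence of refine steps on states and update steps on transitions $e_1,\dots,e_n$, where each refined state and each origin of an updated transition is $s_I$ or the target of an earlier updated transition. A dynamic heuristic over $\sigma$ is $h:S\times\mathcal I_\sigma\to\mathbb R_{\ge0}\cup\{\infty\}$; it is dyn-admissible if $h(s,\iota)\le h^*(s)$ for all $s$ and all reachable $\iota$. Parent source $\sigma_p$: $\mathcal I_{\sigma_p}$ = partial functions $S\rightharpoonup\mathbb R_{\ge0}\times(T\cup\{\bot\})$;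 $\iota_0=\{s_I\mapsto\langle0,\bot\rangle\}$; refine is the identity; $\mathrm{update}(\iota,\langle s,\ell,s'\rangle)$ with $\iota(s)=\langle g,\cdot\rangle$ changes only $s'$, setting it to $\langle g+c(\ell),\langle s,\ell,s'\rangle\rangle$ if $\iota(s')$ is undefined or has $g$-component $\ge g+c(\ell)$, otherwise unchanged. Dynamic A* takes $\mathcal T$, sources $\sigma_p,\sigma_h$, a dynamic heuristic $h$ over $\sigma_h$ and a Boolean flag \texttt{reeval}. Notation: at any moment $g(s)$ is the $g$-component of the current $\mathcal I(\sigma_p)(s)$ and $h(s)$ denotes $h(s,\mathcal I(\sigma_h))$ for the current $\mathcal I(\sigma_h)$. Open is a priority queue of entries $\langle s,g,h\rangle$ (duplicates allowed), popped by minimal stored value $g+h$ (ties arbitrary). Algorithm: 1. $\mathcal I(\sigma):=\iota_0^\sigma$ for both sources; $S_{\mathrm{known}}:=\{s_I\}$; Closed $:=\emptyset$; Open empty. If $h(s_I)<\infty$ insert $\langle s_I,g(s_I),h(s_I)\rangle$. 2. While Open is nonempty: pop an entry $\langle s,\hat g,\hat h\rangle$ of minimal $\hat g+\hat h$. If $s\in$ Closed, continue with the next iteration. Otherwise set $\mathcal I(\sigma):=\mathrm{refine}_\sigma(\mathcal I(\sigma),s)$ for both sources. If \texttt{reeval} is true and $\hat h<h(s)$: if $h(s)<\infty$ insert $\langle s,g(s),h(s)\rangle$; continue with the next iteration (this is a re-evaluation). Otherwise add $s$ to Closed ($s$ is expanded). If $s\in S_G$, return the path obtained by following the parent pointers of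 $\mathcal I(\sigma_p)$ from $s$ back to $s_I$. Otherwise, for each $t=\langle s,\ell,s'\rangle\in T$ in some order: let $old:=g(s')$ if $s'\in S_{\mathrm{known}}$ and undefined otherwise; set $\mathcal I(\sigma):=\mathrm{update}_\sigma(\mathcal I(\sigma),t)$ for both sources; add $s'$ to $S_{\mathrm{known}}$; if $h(s')=\infty$ skip $s'$; else if $old$ is undefined insert $\langle s',g(s'),h(s')\rangle$; else if $old>g(s')$, remove $s'$ from Closed if it is there (reopening) and insert $\langle s',g(s'),h(s')\rangle$. 3. Return ''unsolvable''. *)

From HB Require Import structures.
From mathcomp Require Import all_boot all_order all_algebra.
From mathcomp Require Import boolp classical_sets reals constructive_ereal ereal.
Set Implicit Arguments. Unset Strict Implicit. Unset Printing Implicit Defensive.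
Import Order.TTheory GRing.Theory Num.Theory.
Local Open Scope ring_scope.

Definition trans (S L : finType) := (S * L * S)%type.

Section TransitionSystem.
Variables (R : realType) (S L : finType) (c : L -> R) (T : {set trans S L}).

Fixpoint is_path (s : S) (p : seq (trans S L)) (s' : S) : Prop :=
  match p with
  | [::] => s = s'
  | t :: p' => t \in T /\ t.1.1 = s /\ is_path t.2 p' s'
  end.

Definition path_cost (p : seq (trans S L)) : R := \sum_(t <- p) c t.1.2.

Definition solvable (sI : S) (SG : {set S}) : Prop :=
  exists p s', s' \in SG /\ is_path sI p s'.

(* h*(s): minimal (infimum) cost of a path from s to a goal, +oo if none *)
Definition hstar (SG : {set S}) (s : S) : \bar R :=
  ereal_inf [set (path_cost p)%:E |
             p in [set p | exists2 s', s' \in SG & is_path s p s']]%classic.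

End TransitionSystem.

Record info_source (S L : finType) := InfoSource {
  info : Type;
  info0 : info;
  info_update : info -> trans S L -> info;
  info_refine : info -> S -> info }.

Section Reachability.
Variables (R : realType) (S L : finType) (c : L -> R) (T : {set trans S L}).

Inductive reach_info (σ : info_source S L) (sI : S) : info σ -> {set S} -> Prop :=
| RI_init : reach_info sI (info0 σ) [set sI]
| RI_refine (ι : info σ) (K : {set S}) (s : S) :
    reach_info sI ι K -> s \in K -> reach_info sI (info_refine ι s) K
| RI_update (ι : info σ) (K : {set S}) (t : trans S L) :
    reach_info sI ι K -> t \in T -> t.1.1 \in K ->
    reach_info sI (info_update ι t) (t.2 |: K).

Definition reachable_info (σ : info_source S L) (sI : S) (ι : info σ) : Prop :=
  exists K, reach_info sI ι K.

Definition dyn_heuristic (σ : info_source S L) (h : S -> info σ -> \bar R) : Prop :=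
  forall s ι, (0 <= h s ι)%E.

Definition dyn_admissible (σ : info_source S L) (sI : S) (SG : {set S})
    (h : S -> info σ -> \bar R) : Prop :=
  forall s ι, reachable_info sI ι -> (h s ι <= hstar c T SG s)%E.

End Reachability.

(* Partial functions S -> R_{>=0} x (T \cup {bot}): None = undefined, *)
(* second component None = bot.                                       *)

Section Parent.
Variables (R : realType) (S L : finType) (c : L -> R).

Definition pinfo := S -> option (R * option (trans S L)).

(* update(ι, <s,l,s'>); when ι(s) is undefined (never happens in the
   algorithm) the information is left unchanged. *)
Definition pupdate (ι : pinfo) (t : trans S L) : pinfo :=
  let s := t.1.1 in let l := t.1.2 in let s' := t.2 in
  match ι s with
  | None => ι
  | Some (g, _) =>
      let ng := g + c l in
      let nw := fun x => if x == s' then Some (ng, Some t) else ι x in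
      match ι s' with
      | None => nw
      | Some (g', _) => if ng <= g' then nw else ι
      end
  end.

Definition parent_source (sI : S) : info_source S L :=
  @InfoSource S L pinfo (fun x => if x == sI then Some (0, None) else None)
    pupdate (fun ι _ => ι).

(* the g-component (default 0 where undefined; never used there) *)
Definition gval (ι : pinfo) (s : S) : R :=
  if ι s is Some (g, _) then g else 0.

End Parent.

(* Dynamic A*: configurations at the head of the while loop and one   *)
(* (non-returning) iteration of the loop, as a nondeterministic       *)
(* relation (ties in Open and the order of successors are arbitrary). *)

Record config (R : realType) (S L : finType) (σ : info_source S L) := Config {
  cfgP : pinfo R S L;
  cfgH : info σ;
  cknown : {set S};
  cclosed : {set S};
  copen : seq (S * R * \bar R) }.

Section DynamicAstar.
Variables (R : realType) (S L : finType) (c : L -> R) (T : {set trans S L}).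
Variables (sI : S) (SG : {set S}) (σ : info_source S L).
Variables (h : S -> info σ -> \bar R) (reeval : bool).

Definition entry_val (e : S * R * \bar R) : \bar R := ((e.1.2)%:E + e.2)%E.


Definition process (cf : config R σ) (t : trans S L) : config R σ :=
  let s' := t.2 in
  let old := if s' \in cknown cf then Some (gval (cfgP cf) s') else None in
  let P' := pupdate c (cfgP cf) t in
  let H' := info_update (cfgH cf) t in
  let K' := s' |: cknown cf in
  let e := (s', gval P' s', h s' H') in
  if (h s' H' == +oo)%E then Config P' H' K' (cclosed cf) (copen cf)
  else match old with
       | None => Config P' H' K' (cclosed cf) (e :: copen cf)
       | Some go =>
           if gval P' s' < go
           then Config P' H' K' (cclosed cf :\ s') (e :: copen cf)
           else Config P' H' K' (cclosed cf) (copen cf)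
       end.

Definition init_config : config R σ :=
  let P0 : pinfo R S L := fun x => if x == sI then Some (0, None) else None in
  let H0 := info0 σ in
  Config P0 H0 [set sI] finset.set0
    (if (h sI H0 < +oo)%E then [:: (sI, gval P0 sI, h sI H0)] else [::]).

Definition pop (cf : config R σ) (e : S * R * \bar R) (rest : seq (S * R * \bar R)) :=
  [/\ e \in copen cf,
      (forall e', e' \in copen cf -> (entry_val e <= entry_val e')%E)
    & rest = rem e (copen cf)].

Definition refP (cf : config R σ) (s : S) : pinfo R S L := cfgP cf.
Definition refH (cf : config R σ) (s : S) : info σ := info_refine (cfgH cf) s.

Inductive iter_step : config R σ -> config R σ -> Prop :=
| IS_closed cf e rest :
    pop cf e rest -> e.1.1 \in cclosed cf ->
    iter_step cf (Config (cfgP cf) (cfgH cf) (cknown cf) (cclosed cf) rest)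
| IS_reeval cf e rest :
    pop cf e rest -> e.1.1 \notin cclosed cf ->
    reeval -> (e.2 < h e.1.1 (refH cf e.1.1))%E ->
    iter_step cf
      (Config (refP cf e.1.1) (refH cf e.1.1) (cknown cf) (cclosed cf)
         (if (h e.1.1 (refH cf e.1.1) < +oo)%E
          then (e.1.1, gval (refP cf e.1.1) e.1.1, h e.1.1 (refH cf e.1.1)) :: rest
          else rest))
| IS_expand cf e rest (ts : seq (trans S L)) :
    pop cf e rest -> e.1.1 \notin cclosed cf ->
    ~~ (reeval && (e.2 < h e.1.1 (refH cf e.1.1))%E) ->
    e.1.1 \notin SG ->
    perm_eq ts [seq t <- enum T | t.1.1 == e.1.1] ->
    iter_step cf
      (foldl process
         (Config (refP cf e.1.1) (refH cf e.1.1) (cknown cf)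
            (e.1.1 |: cclosed cf) rest) ts).

Inductive loop_head : config R σ -> Prop :=
| LH_init : loop_head init_config
| LH_step cf cf' : loop_head cf -> iter_step cf cf' -> loop_head cf'.

End DynamicAstar.

(* Invariant: from every known state [x] from which a goal is reachable, either
   [x] is open with an entry whose g is at most g(x) and whose h is at most
   h*(x) (admissibility, since the heuristic information is always reachable),
   or [x] is closed and each of its processed successors [y] is known with
   g(y) <= g(x) + c.  Following any solution from s_I along closed states one
   reaches an open state whose entry is bounded by the cost of that solution,
   so the minimal entry of Open is bounded by all solution costs, hence by
   h*(s_I). *)

From HB Require Import structures.
From mathcomp Require Import all_boot all_order all_algebra.
From mathcomp Require Import boolp classical_sets reals constructive_ereal ereal.
Import Order.TTheory GRing.Theory Num.Theory.
Local Open Scope ring_scope.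
Set Implicit Arguments. Unset Strict Implicit.

Section ParentUpdate.
Variables (R : realType) (S L : finType) (c : L -> R).

Lemma pupdate_other (P : pinfo R S L) t x : x != t.2 -> pupdate c P t x = P x.
Proof.
move=> /negbTE xt; rewrite /pupdate.
case: (P t.1.1) => [[g q]|] //; case: (P t.2) => [[g' q']|]; last by rewrite xt.
by case: ifP; rewrite ?xt.
Qed.

Lemma gval_pupdate_other (P : pinfo R S L) t x :
  x != t.2 -> gval (pupdate c P t) x = gval P x.
Proof. by move=> xt; rewrite /gval pupdate_other. Qed.

Lemma pupdate_defined (P : pinfo R S L) t x :
  P x <> None -> pupdate c P t x <> None.
Proof.
have [->|xt] := eqVneq x t.2; last by rewrite pupdate_other.
rewrite /pupdate; case: (P t.1.1) => [[g q]|] //.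
case E: (P t.2) => [[g' q']|] // _.
by case: ifP; rewrite ?eqxx ?E.
Qed.

Lemma pupdate_target_defined (P : pinfo R S L) t :
  P t.1.1 <> None -> pupdate c P t t.2 <> None.
Proof.
rewrite /pupdate; case: (P t.1.1) => [[g q]|] // _.
case E: (P t.2) => [[g' q']|]; last by rewrite eqxx.
by case: ifP; rewrite ?eqxx ?E.
Qed.

Lemma gval_pupdate_le (P : pinfo R S L) t x :
  P x <> None -> gval (pupdate c P t) x <= gval P x.
Proof.
have [->|xt] := eqVneq x t.2; last by rewrite gval_pupdate_other.
rewrite /gval /pupdate; case: (P t.1.1) => [[g q]|] //.
case E: (P t.2) => [[g' q']|] // _.
by case: ifP; rewrite ?eqxx ?E.
Qed.

Lemma gval_pupdate_edge (P : pinfo R S L) t : (forall l, 0 <= c l) ->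
  P t.1.1 <> None ->
  gval (pupdate c P t) t.2 <= gval (pupdate c P t) t.1.1 + c t.1.2.
Proof.
move=> c_ge0; case Ps: (P t.1.1) => [[g q]|] // _.
have target : gval (pupdate c P t) t.2 <= g + c t.1.2.
  rewrite /gval /pupdate Ps; case E: (P t.2) => [[g' q']|]; last by rewrite eqxx.
  by case: ifP => [_|/negbT]; rewrite ?eqxx // E -ltNge => /ltW.
suff -> : gval (pupdate c P t) t.1.1 = g by [].
have [st|st] := eqVneq t.1.1 t.2; last by rewrite gval_pupdate_other // /gval Ps.
(* on a self-loop the update cannot lower g, as costs are nonnegative *)
rewrite /gval /pupdate Ps -st Ps.
case: ifP => [|_]; rewrite ?eqxx ?Ps // => ge.
by apply/eqP; rewrite eq_le ge lerDl c_ge0.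
Qed.

End ParentUpdate.

Lemma hstar_le_path_cost (R : realType) (S L : finType) (c : L -> R)
    (T : {set trans S L}) (SG : {set S}) s p s' :
  is_path T s p s' -> s' \in SG -> (hstar c T SG s <= (path_cost c p)%:E)%E.
Proof. by move=> sp s'G; apply: ereal_inf_lbound; exists p => //; exists s'. Qed.

Lemma seq_argmin (A : eqType) d (U : orderType d) (f : A -> U) (l : seq A) :
  l != [::] -> exists2 a, a \in l & forall b, b \in l -> (f a <= f b)%O.
Proof.
elim: l => // a l IH _; have [->|/IH [b bl bmin]] := eqVneq l [::].
  by exists a => [|b]; rewrite ?mem_seq1 // => /eqP->.
have [ab|ba] := leP (f a) (f b).
  by exists a => [|x]; rewrite ?mem_head // inE => /predU1P[->//|/bmin]; apply: le_trans.
exists b => [|x]; first by rewrite inE bl orbT.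
by rewrite inE => /predU1P[->|/bmin //]; apply: ltW.
Qed.

Section Invariant.
Variables (R : realType) (S L : finType) (c : L -> R) (T : {set trans S L}).
Variables (sI : S) (SG : {set S}) (σ : info_source S L).
Variables (h : S -> info σ -> \bar R) (reeval : bool).
Hypothesis c_ge0 : forall l, 0 <= c l.
Hypothesis adm : dyn_admissible c T sI SG h.

Local Notation config := (config R σ).
Local Notation pnext cf t := (pupdate c (cfgP cf) t).
Local Notation hnext cf t := (info_update (cfgH cf) t).

Lemma h_lt_pinfty s ι :
  solvable T s SG -> reachable_info T sI ι -> (h s ι < +oo)%E.
Proof.
move=> [p [s' [s'G sp]]] ιr.
apply: (le_lt_trans (adm s ιr)); apply: (le_lt_trans (hstar_le_path_cost c sp s'G)).
exact: ltry.
Qed.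

(* [done x t] records that the transition [t] out of the closed state [x] has
   already been processed; it fails only while [x] is being expanded. *)
Record astar_inv (cf : config) (done : S -> trans S L -> Prop) : Prop := {
  inv_reach : reach_info T sI (cfgH cf) (cknown cf);
  inv_known_def : forall x, x \in cknown cf -> cfgP cf x <> None;
  inv_known_sI : sI \in cknown cf;
  inv_g_sI : gval (cfgP cf) sI <= 0;
  inv_closed_nongoal : forall x, x \in cclosed cf -> x \notin SG;
  inv_closed_known : {subset cclosed cf <= cknown cf};
  inv_open_known : forall e, e \in copen cf -> e.1.1 \in cknown cf;
  inv_open_h : forall e, e \in copen cf -> (e.2 <= hstar c T SG e.1.1)%E;
  inv_frontier : forall x, x \in cknown cf -> solvable T x SG -> x \notin cclosed cf ->
    exists2 e, e \in copen cf & e.1.1 = x /\ e.1.2 <= gval (cfgP cf) x;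
  inv_closed_succ : forall x t, x \in cclosed cf -> solvable T x SG ->
    t \in T -> t.1.1 = x -> done x t ->
    t.2 \in cknown cf /\ gval (cfgP cf) t.2 <= gval (cfgP cf) x + c t.1.2 }.

Lemma astar_inv_weaken cf (done done' : S -> trans S L -> Prop) :
  astar_inv cf done -> (forall x t, t \in T -> t.1.1 = x -> done' x t -> done x t) ->
  astar_inv cf done'.
Proof.
case=> ? ? ? ? ? ? ? ? ? succ sub; constructor => // x t ? ? ? ? ?.
by apply: succ => //; apply: sub.
Qed.

Lemma frontier_rem cf done e x : astar_inv cf done ->
  x \in cknown cf -> solvable T x SG -> x \notin cclosed cf -> x != e.1.1 ->
  exists2 e', e' \in rem e (copen cf) & e'.1.1 = x /\ e'.1.2 <= gval (cfgP cf) x.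
Proof.
move=> iv xK xG xC xe; have [e' e'o [e'x e'g]] := inv_frontier iv xK xG xC.
by exists e' => //; apply: rem_mem => //; apply: contra_neq xe => <-.
Qed.

Variant process_spec (cf : config) (t : trans S L) : config -> Prop :=
| ProcessSkip of (h t.2 (hnext cf t) = +oo%E \/
                  t.2 \in cknown cf /\ gval (cfgP cf) t.2 <= gval (pnext cf t) t.2) :
    process_spec cf t
      (Config (pnext cf t) (hnext cf t) (t.2 |: cknown cf) (cclosed cf) (copen cf))
| ProcessPush :
    process_spec cf t
      (Config (pnext cf t) (hnext cf t) (t.2 |: cknown cf) (cclosed cf :\ t.2)
         ((t.2, gval (pnext cf t) t.2, h t.2 (hnext cf t)) :: copen cf)).

Lemma processP cf t :
  {subset cclosed cf <= cknown cf} -> process_spec cf t (process c h cf t).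
Proof.
move=> closedK; rewrite /process; case: eqP => [hoo|_].
  by apply: ProcessSkip; left.
case: ifP => tK.
  case: ifP => [_|/negbT]; first exact: ProcessPush.
  by rewrite -leNgt => ge; apply: ProcessSkip; right.
suff {1}-> : cclosed cf = cclosed cf :\ t.2 by apply: ProcessPush.
apply/setP => x; rewrite in_setD1; case: eqP => // ->.
by apply/negbTE; apply: contraFN tK => /closedK.
Qed.

Section Process.
Variables (cf : config) (done : S -> trans S L -> Prop) (t : trans S L).
Hypotheses (iv : astar_inv cf done) (tT : t \in T) (tK : t.1.1 \in cknown cf).

Let done' x t0 := t0 = t \/ done x t0.

Lemma process_reach : reach_info T sI (hnext cf t) (t.2 |: cknown cf).
Proof. exact: RI_update (inv_reach iv) tT tK. Qed.

Lemma process_reachable : reachable_info T sI (hnext cf t).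
Proof. by exists (t.2 |: cknown cf); apply: process_reach. Qed.

Lemma process_known_def x : x \in t.2 |: cknown cf -> pnext cf t x <> None.
Proof.
case/setU1P => [->|/(inv_known_def iv)]; last exact: pupdate_defined.
exact/pupdate_target_defined/(inv_known_def iv).
Qed.

Lemma process_g_le x : x \in cknown cf -> gval (pnext cf t) x <= gval (cfgP cf) x.
Proof. by move=> /(inv_known_def iv); apply: gval_pupdate_le. Qed.

Lemma process_frontier_old x :
  x \in cknown cf -> solvable T x SG -> x \notin cclosed cf ->
  gval (cfgP cf) x <= gval (pnext cf t) x ->
  exists2 e, e \in copen cf & e.1.1 = x /\ e.1.2 <= gval (pnext cf t) x.
Proof.
move=> xK xG xC le; have [e eo [ex eg]] := inv_frontier iv xK xG xC.
by exists e => //; split => //; apply: le_trans le.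
Qed.

Lemma process_succ x t0 :
  x \in cclosed cf -> solvable T x SG -> t0 \in T -> t0.1.1 = x -> done' x t0 ->
  gval (cfgP cf) x <= gval (pnext cf t) x ->
  t0.2 \in t.2 |: cknown cf /\ gval (pnext cf t) t0.2 <= gval (pnext cf t) x + c t0.1.2.
Proof.
move=> xC xG t0T t0x [t0t | dn] le.
  rewrite t0t -t0x t0t setU11; split => //.
  exact: gval_pupdate_edge c_ge0 (inv_known_def iv tK).
have [t0K le0] := inv_closed_succ iv xC xG t0T t0x dn; split; first exact: setU1r.
apply: le_trans (process_g_le t0K) _; apply: le_trans le0 _.
by rewrite lerD2r.
Qed.

Lemma process_skip_inv :
  (h t.2 (hnext cf t) = +oo%E \/
   t.2 \in cknown cf /\ gval (cfgP cf) t.2 <= gval (pnext cf t) t.2) ->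
  astar_inv (Config (pnext cf t) (hnext cf t) (t.2 |: cknown cf) (cclosed cf) (copen cf))
    done'.
Proof.
move=> skip; have tG : solvable T t.2 SG ->
    t.2 \in cknown cf /\ gval (cfgP cf) t.2 <= gval (pnext cf t) t.2.
  case: skip => // hoo tG; have := h_lt_pinfty tG process_reachable.
  by rewrite hoo ltxx.
constructor => /=.
- exact: process_reach.
- exact: process_known_def.
- exact/setU1r/(inv_known_sI iv).
- exact: le_trans (process_g_le (inv_known_sI iv)) (inv_g_sI iv).
- exact: inv_closed_nongoal iv.
- by move=> x /(inv_closed_known iv)/setU1r.
- by move=> e /(inv_open_known iv)/setU1r.
- exact: inv_open_h iv.
- move=> x xK' xG xC; have [xt|xt] := eqVneq x t.2.
    by rewrite xt in xG xC *; have [tK2 le] := tG xG; apply: process_frontier_old.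
  have xK : x \in cknown cf by move: xK'; rewrite in_setU1 (negbTE xt).
  by apply: process_frontier_old => //; rewrite gval_pupdate_other.
- move=> x t0 xC xG t0T t0x dn; apply: process_succ => //.
  have [xt|xt] := eqVneq x t.2; last by rewrite gval_pupdate_other.
  by rewrite xt in xG *; case: (tG xG).
Qed.

Lemma process_push_inv :
  astar_inv (Config (pnext cf t) (hnext cf t) (t.2 |: cknown cf) (cclosed cf :\ t.2)
               ((t.2, gval (pnext cf t) t.2, h t.2 (hnext cf t)) :: copen cf))
    done'.
Proof.
constructor => /=.
- exact: process_reach.
- exact: process_known_def.
- exact/setU1r/(inv_known_sI iv).
- exact: le_trans (process_g_le (inv_known_sI iv)) (inv_g_sI iv).
- by move=> x /setD1P[_ /(inv_closed_nongoal iv)].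
- by move=> x /setD1P[_ /(inv_closed_known iv)/setU1r].
- by move=> e /predU1P[-> | /(inv_open_known iv)/setU1r]; rewrite ?setU11.
- move=> e /predU1P[-> | /(inv_open_h iv) //]; exact: adm process_reachable.
- move=> x xK' xG; rewrite in_setD1 negb_and negbK; have [-> _|xt /= xC] := eqVneq x t.2.
    by exists (t.2, gval (pnext cf t) t.2, h t.2 (hnext cf t)); rewrite ?mem_head.
  have xK : x \in cknown cf by move: xK'; rewrite in_setU1 (negbTE xt).
  have le : gval (cfgP cf) x <= gval (pnext cf t) x by rewrite gval_pupdate_other.
  have [e eo ex] := process_frontier_old xK xG xC le.
  by exists e; rewrite // inE eo orbT.
- move=> x t0 /setD1P[xt xC] xG t0T t0x dn.
  by apply: process_succ => //; rewrite gval_pupdate_other.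
Qed.

End Process.

Lemma process_inv cf done t : astar_inv cf done -> t \in T -> t.1.1 \in cknown cf ->
  astar_inv (process c h cf t) (fun x t0 => t0 = t \/ done x t0).
Proof.
move=> iv tT tK; case: (processP t (inv_closed_known iv)) => [skip|].
  exact: process_skip_inv.
exact: process_push_inv.
Qed.

Lemma fold_process_inv ts cf done s : astar_inv cf done -> s \in cknown cf ->
  (forall t, t \in ts -> t \in T /\ t.1.1 = s) ->
  astar_inv (foldl (process c h) cf ts) (fun x t0 => t0 \in ts \/ done x t0).
Proof.
elim: ts cf done => [|t ts IH] cf done iv sK tsT /=.
  by apply: astar_inv_weaken iv _ => x t0 _ _ [].
have [tT ts1] := tsT t (mem_head _ _).
have tK : t.1.1 \in cknown cf by rewrite ts1.
have iv1 := process_inv iv tT tK.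
have sK1 : s \in cknown (process c h cf t).
  by case: (processP t (inv_closed_known iv)) => *; apply: setU1r.
have tsT' t0 : t0 \in ts -> t0 \in T /\ t0.1.1 = s.
  by move=> t0s; apply: tsT; rewrite inE t0s orbT.
apply: astar_inv_weaken (IH _ _ iv1 sK1 tsT') _ => x t0 _ _.
by rewrite inE => -[/predU1P[]|]; tauto.
Qed.

Local Notation inv cf := (astar_inv cf (fun _ _ => True)).

Lemma init_inv : inv (init_config sI h).
Proof.
have r0 : reach_info T sI (info0 σ) [set sI] by exact: RI_init.
have r0' : reachable_info T sI (info0 σ) by exists [set sI].
rewrite /init_config; constructor => //=.
- by move=> x /set1P ->; rewrite eqxx.
- exact: set11.
- by rewrite /gval eqxx.
- by move=> x; rewrite finset.in_set0.
- by move=> x; rewrite finset.in_set0.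
- by case: ifP => // _ e; rewrite mem_seq1 => /eqP ->; apply: set11.
- by case: ifP => // _ e; rewrite mem_seq1 => /eqP ->; apply: adm.
- move=> x /set1P -> sIG _; rewrite (h_lt_pinfty sIG r0').
  by eexists; [apply: mem_head | split].
- by move=> x t; rewrite finset.in_set0.
Qed.

Lemma pop_closed_inv cf e rest : inv cf -> pop cf e rest -> e.1.1 \in cclosed cf ->
  inv (Config (cfgP cf) (cfgH cf) (cknown cf) (cclosed cf) rest).
Proof.
move=> iv [_ _ ->] eC; constructor => /=; try by case: iv.
- by move=> e0 /mem_rem /(inv_open_known iv).
- by move=> e0 /mem_rem /(inv_open_h iv).
- move=> x xK xG xC; have xe : x != e.1.1 by apply: contraNneq xC => ->.
  exact: frontier_rem iv xK xG xC xe.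
Qed.

Lemma reeval_inv cf e rest : inv cf -> pop cf e rest ->
  inv (Config (refP cf e.1.1) (refH cf e.1.1) (cknown cf) (cclosed cf)
         (if (h e.1.1 (refH cf e.1.1) < +oo)%E
          then (e.1.1, gval (refP cf e.1.1) e.1.1, h e.1.1 (refH cf e.1.1)) :: rest
          else rest)).
Proof.
move=> iv [eo _ ->]; set s := e.1.1; set nw := (s, _, _); set o' := if _ then _ else _.
have sK : s \in cknown cf := inv_open_known iv eo.
have rH : reach_info T sI (refH cf s) (cknown cf) := RI_refine (inv_reach iv) sK.
have o'E e0 : e0 \in o' -> e0 = nw \/ e0 \in copen cf.
  rewrite /o'; case: ifP => _; last by move/mem_rem; right.
  by rewrite inE => /predU1P[|/mem_rem]; [left | right].
have remo' : {subset rem e (copen cf) <= o'}.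
  by rewrite /o'; case: ifP => _ e0 // e0o; apply: mem_behead.
constructor => //=; try by case: iv.
- by move=> e0 /o'E [-> | /(inv_open_known iv)].
- by move=> e0 /o'E [-> | /(inv_open_h iv) //]; apply: adm; exists (cknown cf).
- move=> x xK xG xC; have [e' e'o [e'x e'g]] := inv_frontier iv xK xG xC.
  have [e'e|e'e] := eqVneq e' e; last by exists e' => //; apply/remo'/rem_mem.
  have xs : x = s by rewrite -e'x e'e.
  have hs : (h s (refH cf s) < +oo)%E.
    by apply: h_lt_pinfty; [rewrite -xs | exists (cknown cf)].
  by exists nw; rewrite /o' ?hs ?mem_head // xs.
Qed.

Lemma close_inv cf e : inv cf -> e \in copen cf -> e.1.1 \notin SG ->
  astar_inv (Config (refP cf e.1.1) (refH cf e.1.1) (cknown cf) (e.1.1 |: cclosed cf)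
               (rem e (copen cf)))
    (fun x _ => x <> e.1.1).
Proof.
move=> iv eo sG; have sK := inv_open_known iv eo.
constructor => //=; try by case: iv.
- exact: RI_refine (inv_reach iv) sK.
- by move=> x /setU1P[-> //|/(inv_closed_nongoal iv)].
- by move=> x /setU1P[-> //|/(inv_closed_known iv)].
- by move=> e0 /mem_rem /(inv_open_known iv).
- by move=> e0 /mem_rem /(inv_open_h iv).
- move=> x xK xG; rewrite in_setU1 negb_or => /andP[xs xC].
  exact: frontier_rem iv xK xG xC xs.
- move=> x t /setU1P[-> ? ? ? /(_ erefl) //|xC xG tT tx _].
  by have := inv_closed_succ iv xC xG tT tx I.
Qed.

Lemma expand_inv cf e rest ts : inv cf -> pop cf e rest -> e.1.1 \notin SG ->
  perm_eq ts [seq t <- enum T | t.1.1 == e.1.1] ->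
  inv (foldl (process c h)
         (Config (refP cf e.1.1) (refH cf e.1.1) (cknown cf) (e.1.1 |: cclosed cf) rest) ts).
Proof.
move=> iv [eo _ ->] sG ts_out.
have ts_mem t : (t \in ts) = (t \in T) && (t.1.1 == e.1.1).
  by rewrite (perm_mem ts_out) mem_filter mem_enum andbC.
have tsT t : t \in ts -> t \in T /\ t.1.1 = e.1.1 by rewrite ts_mem => /andP[? /eqP].
have iv' := fold_process_inv (close_inv iv eo sG) (inv_open_known iv eo) tsT.
apply: astar_inv_weaken iv' _ => x t tT tx _.
have [xs|xs] := eqVneq x e.1.1; last by right; apply/eqP.
by left; rewrite ts_mem tT tx xs eqxx.
Qed.

Lemma step_inv cf cf' : inv cf -> iter_step c T SG h reeval cf cf' -> inv cf'.
Proof.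
move=> + st; case: st => {cf cf'}
  [cf e rest epop eC | cf e rest epop _ _ _ | cf e rest ts epop _ _ sG ts_out] iv.
- exact: pop_closed_inv iv epop eC.
- exact: reeval_inv iv epop.
- exact: expand_inv iv epop sG ts_out.
Qed.

Lemma loop_head_inv cf : loop_head c T sI SG h reeval cf -> inv cf.
Proof. by elim=> [|? ? _ iv /(step_inv iv)]; [apply: init_inv |]. Qed.

Lemma frontier_entry_le_path cf p s s' g : inv cf ->
  is_path T s p s' -> s' \in SG -> s \in cknown cf -> s \notin cclosed cf ->
  gval (cfgP cf) s <= g ->
  exists2 e, e \in copen cf & (entry_val e <= (g + path_cost c p)%:E)%E.
Proof.
move=> iv sp s'G sK sC sg; have sG : solvable T s SG by exists p, s'.
have [e eo [es eg]] := inv_frontier iv sK sG sC.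
exists e => //; rewrite /entry_val EFinD leeD // ?lee_fin; first exact: le_trans sg.
by apply: le_trans (inv_open_h iv eo) _; rewrite es; apply: hstar_le_path_cost sp s'G.
Qed.

Lemma open_entry_le_path cf p s s' g : inv cf ->
  is_path T s p s' -> s' \in SG -> s \in cknown cf -> gval (cfgP cf) s <= g ->
  exists2 e, e \in copen cf & (entry_val e <= (g + path_cost c p)%:E)%E.
Proof.
move=> iv; elim: p s g => [|t p IH] s g sp s'G sK sg.
all: have [sC|sC] := boolP (s \in cclosed cf);
  last exact: frontier_entry_le_path sp s'G sK sC sg.
  by move: sp s'G => /= <-; rewrite (negbTE (inv_closed_nongoal iv sC)).
have sG : solvable T s SG by exists (t :: p), s'.
case: sp => tT [ts sp]; have [t2K le] := inv_closed_succ iv sC sG tT ts I.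
have [|e eo le'] := IH _ (g + c t.1.2) sp s'G t2K.
  by apply: le_trans le _; rewrite lerD2r.
by exists e; rewrite // /path_cost big_cons addrA.
Qed.

End Invariant.

Theorem lemma3 (R : realType) (S L : finType) (c : L -> R)
    (T : {set trans S L}) (sI : S) (SG : {set S})
    (σ : info_source S L) (h : S -> info σ -> \bar R) (reeval : bool) :
  (forall l, 0 <= c l) ->
  dyn_heuristic h ->
  dyn_admissible c T sI SG h ->
  solvable T sI SG ->
  forall cf : config R σ, loop_head c T sI SG h reeval cf ->
  exists2 e, e \in copen cf & (entry_val e <= hstar c T SG sI)%E.
Proof.
move=> c_ge0 _ adm [p0 [s0 [s0G sp0]]] cf /(loop_head_inv c_ge0 adm) iv.
have path_bound p s' : is_path T sI p s' -> s' \in SG ->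
    exists2 e, e \in copen cf & (entry_val e <= (path_cost c p)%:E)%E.
  move=> sp s'G; rewrite -[path_cost c p]add0r.
  exact: open_entry_le_path iv sp s'G (inv_known_sI iv) (inv_g_sI iv).
have [e0 e0o _] := path_bound _ _ sp0 s0G.
have /(seq_argmin (@entry_val R S))[e eo emin] : copen cf != [::].
  by apply: contraTneq e0o => ->.
exists e => //; apply: le_ereal_inf_tmp => _ [p [s' s'G sp] <-].
have [e' e'o le] := path_bound p s' sp s'G.
exact: le_trans (emin _ e'o) le.
Qed.
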